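(* Let $N$ be a probabilistic algorithmic knowledge structure, $i$ an agent, and $\phi$ a formula containing no occurrence of any $X_j$ operator. If $\mathtt{A}_i$ respects negation, is $\phi$-complete, and is $(\alpha,\beta)$-reliable for $\phi$ in $N$, then $\mathtt{A}_i$ is $(\alpha,\beta)$-reliable for $\phi$ in $N$ if and only if $\mathtt{A}_i$ is $(1-\beta,1-\alpha)$-reliable for $\neg\phi$ in $N$.
   Context: A derandomizer is $v=(v_1,\dots,v_n)$ with each $v_i$ a sequence of coin-toss outcomes; $V$ is the set of derandomizers. A probabilistic algorithmic knowledge structure is $N=(S,\pi,L_1,\dots,L_n,\mathtt{A}^d_1,\dots,\mathtt{A}^d_n,\nu)$ with states $S$, truth assignments $\pi(s)$ to primitive propositions, local-state functions $L_i$, deterministic functions $\mathtt{A}^d_i(\phi,\ell,s,v_i)\in\{$''Yes'',''No'',''?''$\}$ (derandomized version of agent $i$'s knowledge algorithm $\mathtt{A}_i$), and a probability distribution $\nu$ on $V$ such that each answer set $\{v:\mathtt{A}^d_i(\phi,L_i(s),s,v_i)=a\}$ is nonempty iff it has positive $\nu$-probability. Semantics at pairs $(s,v)$: primitive propositions via $\pi$, $\neg,\wedge$ usual, $(N,s,v)\models K_i\phi$ iff $(N,t,v')\models\phi$ for all $v'$ and all $t$ with $L_i(t)=L_i(s)$, $(N,s,v)\models X_i\phi$ iff $\mathtt{A}^d_i(\phi,L_i(s),s,v_i)=$''Yes'', $(N,s,v)\models\Pr(\phi)\ge\alpha$ iff $\nu(\{v':(N,s,v')\models\phi\})\ge\alpha$.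 For a formula $\psi$ and state $s$, $\mu_{s,\psi}(\mathit{ob})=\nu(\{v':\mathtt{A}^d_i(\psi,L_i(s),s,v'_i)=\mathit{ob}\})$. For $\alpha,\beta\in[0,1]$, $\mathtt{A}_i$ is $(\alpha,\beta)$-reliable for $\psi$ in $N$ if for all $s,v$: $(N,s,v)\models\psi$ implies $\mu_{s,\psi}($''Yes''$)\ge\alpha$, and $(N,s,v)\models\neg\psi$ implies $\mu_{s,\psi}($''Yes''$)\le\beta$. $\mathtt{A}_i$ is $\phi$-complete if $\mathtt{A}^d_i(\phi,L_i(s),s,v_i)\in\{$''Yes'',''No''$\}$ for all $s,v$. $\mathtt{A}_i$ weakly respects negation if for all $\psi,\ell,s,v$: $\mathtt{A}^d_i(\neg\psi,\ell,s,v_i)$ is ''Yes'' when $\mathtt{A}^d_i(\psi,\ell,s,v_i)=$''No'', ''No'' when it is ''Yes'', and ''?'' when it is ''?''; it strongly respects negation if $\mathtt{A}^d_i(\neg\psi,\ell,s,v_i)$ is ''Yes'' when $\mathtt{A}^d_i(\psi,\ell,s,v_i)\neq$''Yes'' and ''No'' when it is ''Yes''; it respects negation if it weakly or strongly respects negation. *)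

From Stdlib Require Import Reals.
From Stdlib Require Fin.
Open Scope R_scope.

Inductive formula (n : nat) (Prim : Type) : Type :=
| FPrim : Prim -> formula n Prim
| FNeg  : formula n Prim -> formula n Prim
| FAnd  : formula n Prim -> formula n Prim -> formula n Prim
| FK    : Fin.t n -> formula n Prim -> formula n Prim
| FX    : Fin.t n -> formula n Prim -> formula n Prim
| FPrGe : formula n Prim -> R -> formula n Prim.

Arguments FPrim {n Prim}.
Arguments FNeg {n Prim}.
Arguments FAnd {n Prim}.
Arguments FK {n Prim}.
Arguments FX {n Prim}.
Arguments FPrGe {n Prim}.

Fixpoint noX {n Prim} (f : formula n Prim) : Prop :=
  match f with
  | FPrim _ => True
  | FNeg g => noX g
  | FAnd g h => noX g /\ noX h
  | FK _ g => noX g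
  | FX _ _ => False
  | FPrGe g _ => noX g
  end.

Inductive answer : Type := Yes | No | DontKnow.

Definition coins : Type := nat -> bool.
Definition derand (n : nat) : Type := Fin.t n -> coins.

Record prob (V : Type) : Type := {
  pr :> (V -> Prop) -> R;
  pr_ge0 : forall A, 0 <= pr A;
  pr_setT : pr (fun _ => True) = 1;
  pr_add : forall A B : V -> Prop, (forall x, A x -> B x -> False) ->
           pr (fun x => A x \/ B x) = pr A + pr B;
  pr_sigma : forall A : nat -> V -> Prop,
      (forall k l x, k <> l -> A k x -> A l x -> False) ->
      infinite_sum (fun k => pr (A k)) (pr (fun x => exists k, A k x))
}.

Record pak_structure (n : nat) (Prim : Type) : Type := {
  St : Type;
  Loc : Type;
  pi : St -> Prim -> bool;
  Lf : Fin.t n -> St -> Loc;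
  Ad : Fin.t n -> formula n Prim -> Loc -> St -> coins -> answer;
  nu : prob (derand n);
  nu_answer : forall (i : Fin.t n) (f : formula n Prim) (s : St) (a : answer),
      (exists v : derand n, Ad i f (Lf i s) s (v i) = a) <->
      0 < nu (fun v => Ad i f (Lf i s) s (v i) = a)
}.

Arguments St {n Prim}.
Arguments Loc {n Prim}.
Arguments pi {n Prim}.
Arguments Lf {n Prim}.
Arguments Ad {n Prim}.
Arguments nu {n Prim}.

Fixpoint sat {n Prim} (N : pak_structure n Prim) (s : St N) (v : derand n)
  (f : formula n Prim) : Prop :=
  match f with
  | FPrim p => pi N s p = true
  | FNeg g => ~ sat N s v g
  | FAnd g h => sat N s v g /\ sat N s v h
  | FK i g => forall (t : St N) (v' : derand n),
      Lf N i t = Lf N i s -> sat N t v' g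
  | FX i g => Ad N i g (Lf N i s) s (v i) = Yes
  | FPrGe g a => nu N (fun v' => sat N s v' g) >= a
  end.

Definition mu {n Prim} (N : pak_structure n Prim) (i : Fin.t n) (s : St N)
  (psi : formula n Prim) (ob : answer) : R :=
  nu N (fun v' => Ad N i psi (Lf N i s) s (v' i) = ob).

Definition reliable {n Prim} (N : pak_structure n Prim) (i : Fin.t n)
  (psi : formula n Prim) (alpha beta : R) : Prop :=
  forall (s : St N) (v : derand n),
    (sat N s v psi -> mu N i s psi Yes >= alpha) /\
    (sat N s v (FNeg psi) -> mu N i s psi Yes <= beta).

Definition complete_for {n Prim} (N : pak_structure n Prim) (i : Fin.t n)
  (phi : formula n Prim) : Prop :=
  forall (s : St N) (v : derand n),
    Ad N i phi (Lf N i s) s (v i) = Yes \/ Ad N i phi (Lf N i s) s (v i) = No.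

Definition weakly_respects_negation {n Prim} (N : pak_structure n Prim)
  (i : Fin.t n) : Prop :=
  forall (psi : formula n Prim) (l : Loc N) (s : St N) (v : derand n),
    (Ad N i psi l s (v i) = No -> Ad N i (FNeg psi) l s (v i) = Yes) /\
    (Ad N i psi l s (v i) = Yes -> Ad N i (FNeg psi) l s (v i) = No) /\
    (Ad N i psi l s (v i) = DontKnow -> Ad N i (FNeg psi) l s (v i) = DontKnow).

Definition strongly_respects_negation {n Prim} (N : pak_structure n Prim)
  (i : Fin.t n) : Prop :=
  forall (psi : formula n Prim) (l : Loc N) (s : St N) (v : derand n),
    (Ad N i psi l s (v i) <> Yes -> Ad N i (FNeg psi) l s (v i) = Yes) /\
    (Ad N i psi l s (v i) = Yes -> Ad N i (FNeg psi) l s (v i) = No).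

Definition respects_negation {n Prim} (N : pak_structure n Prim)
  (i : Fin.t n) : Prop :=
  weakly_respects_negation N i \/ strongly_respects_negation N i.

(* Completeness together with respect for negation makes the algorithm answer
   "Yes" on [~ phi] exactly when it does not answer "Yes" on [phi], for every
   derandomizer.  Hence mu_{s,~phi}(Yes) = 1 - mu_{s,phi}(Yes), and the two
   reliability conditions are the same inequalities read through x |-> 1 - x. *)

From Stdlib Require Import Reals.
From Stdlib Require Fin.
From Stdlib Require Import Lra Classical FunctionalExtensionality PropExtensionality.
Open Scope R_scope.

Lemma pr_ext {V : Type} (P : prob V) (A B : V -> Prop) :
  (forall x, A x <-> B x) -> P A = P B.
Proof.
  intros AB. f_equal. apply functional_extensionality. intros x.
  apply propositional_extensionality, AB.
Qed.

Lemma pr_compl {V : Type} (P : prob V) (A : V -> Prop) :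
  P (fun x => ~ A x) = 1 - P A.
Proof.
  assert (Hadd := pr_add V P A (fun x => ~ A x) ltac:(firstorder)).
  assert (Hfull : pr V P (fun x => A x \/ ~ A x) = pr V P (fun _ => True)).
  { apply pr_ext. intros x. split; auto. intros _. apply classic. }
  cbv beta in Hadd. rewrite Hfull, pr_setT in Hadd. simpl. lra.
Qed.

Section NegationAnswers.

Variables (n : nat) (Prim : Type) (N : pak_structure n Prim) (i : Fin.t n).
Hypothesis Hneg : respects_negation N i.

Lemma respects_negation_Yes (psi : formula n Prim) (l : Loc N) (s : St N)
  (v : derand n) :
  Ad N i psi l s (v i) = Yes -> Ad N i (FNeg psi) l s (v i) = No.
Proof.
  destruct Hneg as [W | S].
  - apply (W psi l s v).
  - apply (S psi l s v).
Qed.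

Lemma respects_negation_No (psi : formula n Prim) (l : Loc N) (s : St N)
  (v : derand n) :
  Ad N i psi l s (v i) = No -> Ad N i (FNeg psi) l s (v i) = Yes.
Proof.
  intros E. destruct Hneg as [W | S].
  - apply (W psi l s v), E.
  - apply (S psi l s v). rewrite E. discriminate.
Qed.

Lemma complete_FNeg_Yes (phi : formula n Prim) :
  complete_for N i phi -> forall (s : St N) (v : derand n),
  Ad N i (FNeg phi) (Lf N i s) s (v i) = Yes <->
  Ad N i phi (Lf N i s) s (v i) <> Yes.
Proof.
  intros Hc s v. destruct (Hc s v) as [E | E].
  - rewrite (respects_negation_Yes _ _ _ _ E). split; congruence.
  - rewrite (respects_negation_No _ _ _ _ E). split; congruence.
Qed.

Lemma complete_mu_FNeg_Yes (phi : formula n Prim) :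
  complete_for N i phi -> forall s : St N,
  mu N i s (FNeg phi) Yes = 1 - mu N i s phi Yes.
Proof.
  intros Hc s. unfold mu. rewrite <- pr_compl.
  apply pr_ext. intros v. apply complete_FNeg_Yes, Hc.
Qed.

End NegationAnswers.

Lemma reliable_FNeg_iff {n : nat} {Prim : Type} (N : pak_structure n Prim)
  (i : Fin.t n) (phi : formula n Prim) (alpha beta : R) :
  (forall s, mu N i s (FNeg phi) Yes = 1 - mu N i s phi Yes) ->
  reliable N i phi alpha beta <->
  reliable N i (FNeg phi) (1 - beta) (1 - alpha).
Proof.
  intros Hmu. split; intros Hr s v; rewrite ?Hmu; destruct (Hr s v) as [Hsat Hunsat].
  - split.
    + intros Hs. specialize (Hunsat Hs). lra.
    + intros Hs. apply NNPP in Hs. specialize (Hsat Hs). lra.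
  - rewrite Hmu in Hsat, Hunsat. split.
    + intros Hs. assert (Hss : sat N s v (FNeg (FNeg phi))) by (simpl; tauto).
      specialize (Hunsat Hss). lra.
    + intros Hs. specialize (Hsat Hs). lra.
Qed.

Theorem proposition5p4 (n : nat) (Prim : Type) (N : pak_structure n Prim)
  (i : Fin.t n) (phi : formula n Prim) (alpha beta : R) :
  0 <= alpha <= 1 -> 0 <= beta <= 1 ->
  noX phi ->
  respects_negation N i ->
  complete_for N i phi ->
  reliable N i phi alpha beta ->
  (reliable N i phi alpha beta <->
   reliable N i (FNeg phi) (1 - beta) (1 - alpha)).
Proof.
  intros _ _ _ Hneg Hc _.
  apply reliable_FNeg_iff, complete_mu_FNeg_Yes; assumption.
Qed.
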